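(* (i) Let $V\in\mathrm{Rep}_{\mathrm{ffd}}(Y_\hbar(\mathfrak g))$ and let $\mu$ be a weight of $V$. Then, for either choice of sign, the poles of $\xi_i(u)_\mu$ are contained in the union of the poles of $x_i^\pm(u)_\mu$ and those of $x_i^\pm(u)_{\mu\mp\alpha_i}$. (ii) Let $\mathcal V\in\mathrm{Rep}_{\mathrm{ffd}}(U_q(L\mathfrak g))$ and let $\mu$ be a weight of $\mathcal V$. Then, for either choice of sign, the poles of $\Psi_i(z)_\mu$ are contained in the union of the poles of $\mathcal X_i^\pm(z)_\mu$ and those of $\mathcal X_i^\pm(z)_{\mu\mp\alpha_i}$.
   Context: $\mathfrak g$ is the Kac–Moody algebra of a symmetrisable generalized Cartan matrix $(a_{ij})_{i,j\in I}$ (symmetrisers $d_i$, realization $(\mathfrak h,\{\alpha_i\},\{\alpha_i^\vee\})$); $\hbar\ne0$; $q$ not a root of unity, $q_i=q^{d_i}$. $Y_\hbar(\mathfrak g)$ and $U_q(L\mathfrak g)$ are the Yangian (generators $h,\xi_{i,r},x^\pm_{i,r}$; in particular $[x^+_{i,r},x^-_{j,s}]=\delta_{ij}\xi_{i,r+s}$) and quantum loop algebra (generators $K_h,\Psi^\pm_{i,\pm r},\mathcal X^\pm_{i,k}$; in particular $[\mathcal X^+_{i,k},\mathcal X^-_{j,l}]=\delta_{ij}\frac{\Psi^+_{i,k+l}-\Psi^-_{i,k+l}}{q_i-q_i^{-1}}$) in Drinfeld's loop presentation. $\mathrm{Rep}_{\mathrm{ffd}}$: modules with finite-dimensional weight spaces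 ($h$ acts by $\mu(h)$, resp. $K_h$ by $q^{\mu(h)}$), weights bounded above by finitely many weights, and for each weight $\mu$ and $i$, $\mu-n\alpha_i$ not a weight for $n\gg0$. For a weight $\mu$, $\xi_i(u)_\mu$ and $x_i^\pm(u)_\mu:V_\mu\to V_{\mu\pm\alpha_i}$ denote the rational functions whose expansions at $u=\infty$ are the actions of $\xi_i(u)=1+\hbar\sum\xi_{i,r}u^{-r-1}$ and $x_i^\pm(u)=\hbar\sum x^\pm_{i,r}u^{-r-1}$ on $V_\mu$; $\Psi_i(z)_\mu$, $\mathcal X_i^\pm(z)_\mu:\mathcal V_\mu\to\mathcal V_{\mu\pm\alpha_i}$ denote the rational functions whose expansions at $z=\infty$ and $z=0$ are $\sum_{r\ge0}\Psi^+_{i,r}z^{-r}$, $\sum_{r\ge0}\Psi^-_{i,-r}z^r$, resp. $\sum_{k\ge0}\mathcal X^\pm_{i,k}z^{-k}$, $-\sum_{k<0}\mathcal X^\pm_{i,k}z^{-k}$. *)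

From HB Require Import structures.
From mathcomp Require Import all_boot all_order all_algebra all_fingroup.
From mathcomp Require Import all_classical all_reals sequences exp trigo.
From mathcomp Require Import complex.
Set Implicit Arguments. Unset Strict Implicit. Unset Printing Implicit Defensive.
Import Order.TTheory GRing.Theory Num.Theory ComplexField.
Local Open Scope ring_scope.

Definition cexp (R : realType) (z : complex R) : complex R :=
  let: Complex a b := z in Complex (expR a * cos b) (expR a * sin b).

(* q^x := exp (x * log q), for a fixed choice lq of log q (q = cexp lq).     *)
Definition qpow (R : realType) (lq x : complex R) : complex R := cexp (x * lq).

Definition generalized_cartan (n : nat) (A : 'M[int]_n) : Prop :=
  (forall i, A i i = 2) /\ (forall i j, i != j -> A i j <= 0) /\
  (forall i j, A i j = 0 <-> A j i = 0).

Definition symmetrisers (n : nat) (A : 'M[int]_n) (d : 'I_n -> nat) : Prop :=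
  (forall i, (0 < d i)%N) /\ (forall i j, (d i)%:Z * A i j = (d j)%:Z * A j i).

(* h = 'rV_m, h^* = 'rV_m, with the pairing  <lambda, h> = sum_k lambda_k h_k *)
Definition pairing (C : fieldType) (m : nat) (l h : 'rV[C]_m) : C :=
  \sum_(k < m) l 0 k * h 0 k.

Definition realization (C : fieldType) (n : nat) (A : 'M[int]_n) (m : nat)
    (al alv : 'I_n -> 'rV[C]_m) : Prop :=
  m = (2 * n - \rank (map_mx (fun z : int => z%:~R : C) A))%N /\
  row_free (\matrix_(i < n) al i) /\ row_free (\matrix_(i < n) alv i) /\
  (forall i j, pairing (al j) (alv i) = (A i j)%:~R).

(* Weight modules.  A module V = (+)_mu V_mu in which h acts on V_mu by mu is *)
(* described by the dimensions dm mu of its weight spaces V_mu = C^(dm mu),   *)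
(* and an operator on V by its blocks  f mu nu : V_mu -> V_nu.                *)
Section WeightOps.
Variables (C : fieldType) (m : nat) (dm : 'rV[C]_m -> nat).

Definition gop := forall mu nu : 'rV[C]_m, 'M[C]_(dm nu, dm mu).

Definition zero_op : gop := fun mu nu => 0.

Definition homog (b : 'rV[C]_m) (f : gop) : Prop :=
  forall mu nu, nu != mu + b -> f mu nu = 0.

Definition id_op : gop :=
  fun mu nu => \matrix_(a, c) ((nu == mu) && (val a == val c))%:R.

(* mulops [:: (b1,f1); ...; (bk,fk)] = f1 f2 ... fk (fk applied first), for  *)
(* homogeneous operators fj of degree bj.                                     *)
Fixpoint mulops (fs : seq ('rV[C]_m * gop)) : gop :=
  match fs with
  | [::] => id_op
  | (b, f) :: fs' =>
      fun mu nu => f (mu + \sum_(p <- fs') p.1) nu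
                   *m mulops fs' mu (mu + \sum_(p <- fs') p.1)
  end.

Definition mul2 (f : gop) (a : 'rV[C]_m) (g : gop) (b : 'rV[C]_m) : gop :=
  mulops [:: (a, f); (b, g)].

Definition comm_op (f : gop) (a : 'rV[C]_m) (g : gop) (b : 'rV[C]_m) : gop :=
  fun mu nu => mul2 f a g b mu nu - mul2 g b f a mu nu.

Fixpoint nest_comm (fs : seq ('rV[C]_m * gop)) (g : 'rV[C]_m * gop)
    : 'rV[C]_m * gop :=
  match fs with
  | [::] => g
  | (a, f) :: fs' =>
      let bh := nest_comm fs' g in (a + bh.1, comm_op f a bh.2 bh.1)
  end.

(* Category Rep_ffd (weight spaces are finite-dimensional by construction):  *)
Definition ffd (n : nat) (al : 'I_n -> 'rV[C]_m) : Prop :=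
  (exists s : seq 'rV[C]_m, forall mu, (0 < dm mu)%N ->
     exists2 la, la \in s & exists c : 'I_n -> nat,
       la - mu = \sum_(i < n) (c i)%:R *: al i) /\
  (forall mu (i : 'I_n), (0 < dm mu)%N ->
     exists N, forall k, (N <= k)%N -> dm (mu - k%:R *: al i) = 0%N).

End WeightOps.

Definition sgn (C : fieldType) (b : bool) : C := if b then 1 else -1.
(* degree of x^+_i (b = true) resp. x^-_i (b = false) *)
Definition rdeg (C : fieldType) m n (al : 'I_n -> 'rV[C]_m) (b : bool) i :=
  if b then al i else - al i.

(* Representations of the Yangian Y_hb(g) on a weight module: operators      *)
(* xi i r = xi_{i,r},  x b i r = x^{+/-}_{i,r}  (b = true for +).             *)
Definition yangian_rep (C : fieldType) (n : nat) (A : 'M[int]_n)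
    (d : 'I_n -> nat) (m : nat) (al alv : 'I_n -> 'rV[C]_m) (hb : C)
    (dm : 'rV[C]_m -> nat)
    (xi : 'I_n -> nat -> gop dm) (x : bool -> 'I_n -> nat -> gop dm) : Prop :=
  let D := rdeg al in
  (* weight conditions, i.e. [h, xi_{i,r}] = 0, [h, x^+-_{j,s}] = +-alpha_j(h) x *)
  (forall i r, homog 0 (xi i r)) /\
  (forall b i r, homog (D b i) (x b i r)) /\
  (forall i mu, xi i 0%N mu mu = ((d i)%:R * pairing mu (alv i))%:M) /\
  (forall i j r s mu nu, comm_op (xi i r) 0 (xi j s) 0 mu nu = 0) /\
  (forall b i j s mu nu, comm_op (xi i 0%N) 0 (x b j s) (D b j) mu nu =
     (sgn C b * ((d i)%:Z * A i j)%:~R) *: x b j s mu nu) /\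
  (forall b i j r s mu nu,
     comm_op (xi i r.+1) 0 (x b j s) (D b j) mu nu
     - comm_op (xi i r) 0 (x b j s.+1) (D b j) mu nu =
     (sgn C b * ((d i)%:Z * A i j)%:~R * hb / 2) *:
       (mul2 (xi i r) 0 (x b j s) (D b j) mu nu
        + mul2 (x b j s) (D b j) (xi i r) 0 mu nu)) /\
  (forall b i j r s mu nu,
     comm_op (x b i r.+1) (D b i) (x b j s) (D b j) mu nu
     - comm_op (x b i r) (D b i) (x b j s.+1) (D b j) mu nu =
     (sgn C b * ((d i)%:Z * A i j)%:~R * hb / 2) *:
       (mul2 (x b i r) (D b i) (x b j s) (D b j) mu nu
        + mul2 (x b j s) (D b j) (x b i r) (D b i) mu nu)) /\
  (forall i j r s mu nu,
     comm_op (x true i r) (D true i) (x false j s) (D false j) mu nu =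
     if i == j then xi i (r + s)%N mu nu else 0) /\
  (forall b i j, i != j -> forall (rs : 'I_(absz (1 - A i j)) -> nat) s mu nu,
     \sum_(p : 'S_(absz (1 - A i j)))
        (nest_comm [seq (D b i, x b i (rs (p t))) | t <- enum 'I_(absz (1 - A i j))]
                   (D b j, x b j s)).2 mu nu = 0).

Definition qint (C : fieldType) (v : C) (k : nat) : C := (v ^+ k - v ^- k) / (v - v^-1).
Definition qfact (C : fieldType) (v : C) (k : nat) : C := \prod_(1 <= l < k.+1) qint v l.
Definition qbinom (C : fieldType) (v : C) (k l : nat) : C :=
  qfact v k / (qfact v l * qfact v (k - l)).

(* Psi^{e}_{i,k} (e = true: Psi^+, e = false: Psi^-), from the operators     *)
(* psp i r = Psi^+_{i,r} and psm i r = Psi^-_{i,-r} (r >= 0), with the        *)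
(* conventions Psi^+_{i,k} = 0 for k < 0 and Psi^-_{i,k} = 0 for k > 0.       *)
Definition Psi (C : fieldType) m (dm : 'rV[C]_m -> nat) n
    (psp psm : 'I_n -> nat -> gop dm) (e : bool) (i : 'I_n) (k : int) : gop dm :=
  if e then (if (0 <= k)%R then psp i (absz k) else zero_op dm)
  else (if (k <= 0)%R then psm i (absz k) else zero_op dm).

(* Representations of U_q(Lg) on a weight module on which K_h acts on V_mu by *)
(* q^{mu(h)} = qpow lq (mu(h)) (q = cexp lq):  psp, psm as above,             *)
(* X b i k = X^{+/-}_{i,k}, k in Z.                                           *)
Definition qloop_rep (R : realType) (n : nat) (A : 'M[int]_n)
    (d : 'I_n -> nat) (m : nat) (al alv : 'I_n -> 'rV[complex R]_m)
    (q lq : complex R) (dm : 'rV[complex R]_m -> nat)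
    (psp psm : 'I_n -> nat -> gop dm) (X : bool -> 'I_n -> int -> gop dm) : Prop :=
  let C := complex R in
  let D := rdeg al in
  let P := Psi psp psm in
  let qi := fun i : 'I_n => q ^+ d i in
  (* weight conditions: [K_h, Psi] = 0, K_h X^+-_{j,k} K_h^-1 = q^{+-alpha_j(h)} X *)
  (forall i r, homog 0 (psp i r)) /\ (forall i r, homog 0 (psm i r)) /\
  (forall b i k, homog (D b i) (X b i k)) /\
  (forall i mu, psp i 0%N mu mu = (qpow lq ((d i)%:R * pairing mu (alv i)))%:M) /\
  (forall i mu, psm i 0%N mu mu = (qpow lq (- ((d i)%:R * pairing mu (alv i))))%:M) /\
  (forall e e' i j k l mu nu, comm_op (P e i k) 0 (P e' j l) 0 mu nu = 0) /\
  (forall e b i j k l mu nu,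
     let a := q ^ ((if b then 1 else -1) * ((d i)%:Z * A i j)) in
     mul2 (P e i (k + 1)) 0 (X b j l) (D b j) mu nu
     - a *: mul2 (P e i k) 0 (X b j (l + 1)) (D b j) mu nu =
     a *: mul2 (X b j l) (D b j) (P e i (k + 1)) 0 mu nu
     - mul2 (X b j (l + 1)) (D b j) (P e i k) 0 mu nu) /\
  (forall b i j k l mu nu,
     let a := q ^ ((if b then 1 else -1) * ((d i)%:Z * A i j)) in
     mul2 (X b i (k + 1)) (D b i) (X b j l) (D b j) mu nu
     - a *: mul2 (X b i k) (D b i) (X b j (l + 1)) (D b j) mu nu =
     a *: mul2 (X b j l) (D b j) (X b i (k + 1)) (D b i) mu nu
     - mul2 (X b j (l + 1)) (D b j) (X b i k) (D b i) mu nu) /\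
  (forall i j k l mu nu,
     comm_op (X true i k) (D true i) (X false j l) (D false j) mu nu =
     if i == j then (qi i - (qi i)^-1)^-1 *:
                      (P true i (k + l) mu nu - P false i (k + l) mu nu)
     else 0) /\
  (forall b i j, i != j -> forall (ks : 'I_(absz (1 - A i j)) -> int) l mu nu,
     \sum_(p : 'S_(absz (1 - A i j)))
       \sum_(s < (absz (1 - A i j)).+1)
         ((-1) ^+ s * qbinom (qi i) (absz (1 - A i j)) s) *:
         mulops ([seq (D b i, X b i (ks (p t)))
                   | t <- [seq t <- enum 'I_(absz (1 - A i j)) | (val t < val s)%N]]
                 ++ (D b j, X b j l)
                 :: [seq (D b i, X b i (ks (p t)))
                   | t <- [seq t <- enum 'I_(absz (1 - A i j)) | (val s <= val t)%N]]) mu nu = 0).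

(* Poles of a matrix-valued rational function F, given by its expansion at   *)
(* u = infinity:  F(u) = sum_{r >= 0} e r u^{-r}.                              *)
(* A nonzero polynomial Q is a denominator of F if Q(u) F(u) is a polynomial, *)
(* i.e. all coefficients of u^{-t}, t >= 1, of Q(u) F(u) vanish.              *)
Definition is_denominator (C : fieldType) (p p' : nat)
    (Q : {poly C}) (e : nat -> 'M[C]_(p, p')) : Prop :=
  Q != 0 /\ forall t, (0 < t)%N -> \sum_(k < size Q) Q`_k *: e (k + t)%N = 0.

(* z is a pole of F iff it is a root of every denominator of F (i.e. a root  *)
(* of the reduced denominator).                                              *)
Definition is_pole (C : fieldType) (p p' : nat)
    (e : nat -> 'M[C]_(p, p')) (z : C) : Prop :=
  forall Q : {poly C}, is_denominator Q e -> root Q z.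

(* xi_i(u)_mu = 1 + hb sum_r xi_{i,r} u^{-r-1}                                *)
Definition xi_series (C : fieldType) m (dm : 'rV[C]_m -> nat) n
    (hb : C) (xi : 'I_n -> nat -> gop dm) i mu : nat -> 'M[C]_(dm mu, dm mu) :=
  fun r => if r is r'.+1 then hb *: xi i r' mu mu else 1%:M.

(* x^+-_i(u)_mu = hb sum_r x^+-_{i,r} u^{-r-1} : V_mu -> V_{mu +- alpha_i}    *)
Definition x_series (C : fieldType) m (dm : 'rV[C]_m -> nat) n
    (al : 'I_n -> 'rV[C]_m) (hb : C) (x : bool -> 'I_n -> nat -> gop dm) b i mu
    : nat -> 'M[C]_(dm (mu + rdeg al b i), dm mu) :=
  fun r => if r is r'.+1 then hb *: x b i r' mu (mu + rdeg al b i) else 0.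

(* Psi_i(z)_mu = sum_{r >= 0} Psi^+_{i,r} z^{-r} (expansion at infinity)      *)
Definition Psi_series (C : fieldType) m (dm : 'rV[C]_m -> nat) n
    (psp : 'I_n -> nat -> gop dm) i mu : nat -> 'M[C]_(dm mu, dm mu) :=
  fun r => psp i r mu mu.

(* X^+-_i(z)_mu = sum_{k >= 0} X^+-_{i,k} z^{-k} (expansion at infinity)      *)
Definition X_series (C : fieldType) m (dm : 'rV[C]_m -> nat) n
    (al : 'I_n -> 'rV[C]_m) (X : bool -> 'I_n -> int -> gop dm) b i mu
    : nat -> 'M[C]_(dm (mu + rdeg al b i), dm mu) :=
  fun k => X b i k mu (mu + rdeg al b i).

From HB Require Import structures.
From mathcomp Require Import all_boot all_order all_algebra all_fingroup.
From mathcomp Require Import all_classical all_reals sequences exp trigo.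
From mathcomp Require Import complex.
Set Implicit Arguments. Unset Strict Implicit. Unset Printing Implicit Defensive.
Import Order.TTheory GRing.Theory Num.Theory ComplexField.
Local Open Scope ring_scope.

(* On the weight space V_mu, relation [x^+_{i,r}, x^-_{i,s}] = xi_{i,r+s} with
   s = 0 (resp. r = 0) writes every xi_{i,r} as x^±_{i,r} B + B' x^±_{i,r}, for
   fixed blocks B, B' of x^∓_{i,0} and the blocks of x^±_{i,r} ending in V_mu
   resp. starting from V_mu. Hence the product of denominators of the two
   x-series is a denominator of xi_i(u)_mu, and a point that is a root of
   neither factor is not a pole. For U_q(Lg) relation (QL6) plays the same
   role, after dividing by q_i - q_i^-1, which is nonzero because q is neither
   0 nor a root of unity. *)

Section Denominators.
Variable C : fieldType.
Implicit Types P Q : {poly C}.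

Definition annihilates_tail p p' Q (f : nat -> 'M[C]_(p, p')) :=
  forall t, (0 < t)%N -> \sum_(k < size Q) Q`_k *: f (k + t)%N = 0.

Lemma sum_coef_widen N p p' Q (f : nat -> 'M[C]_(p, p')) t : (size Q <= N)%N ->
  \sum_(k < size Q) Q`_k *: f (k + t)%N = \sum_(k < N) Q`_k *: f (k + t)%N.
Proof.
move=> sQ; rewrite (big_ord_widen N (fun k => Q`_k *: f (k + t)%N)) //.
rewrite big_mkcond /=; apply: eq_bigr => k _; case: ltnP => // leQk.
by rewrite (leq_sizeP _ _ leQk k (leqnn k)) scale0r.
Qed.
Arguments sum_coef_widen N {p p' Q f t}.

Section AnnihilatesTail.
Variables (p p' : nat) (f : nat -> 'M[C]_(p, p')).

Lemma annihilates_tailXM Q : annihilates_tail Q f -> annihilates_tail ('X * Q) f.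
Proof.
move=> fQ t t_gt0; rewrite (sum_coef_widen (size Q).+1); last first.
  by rewrite (leq_trans (size_polyMleq _ _)) // size_polyX.
rewrite big_ord_recl coefXM /= scale0r add0r -[RHS](fQ t.+1 isT).
by apply: eq_bigr => k _; rewrite coefXM /= addnS.
Qed.

Lemma annihilates_tailD P Q :
  annihilates_tail P f -> annihilates_tail Q f -> annihilates_tail (P + Q) f.
Proof.
move=> fP fQ t t_gt0; rewrite (sum_coef_widen (maxn (size P) (size Q))).
  under eq_bigr => k _ do rewrite coefD scalerDl.
  rewrite big_split /= -(sum_coef_widen _ (leq_maxl _ _)).
  by rewrite -(sum_coef_widen _ (leq_maxr _ _)) fP // fQ // addr0.
exact: size_polyD.
Qed.

Lemma annihilates_tailZ c Q : annihilates_tail Q f -> annihilates_tail (c *: Q) f.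
Proof.
move=> fQ t t_gt0; rewrite (sum_coef_widen (size Q)); last exact: size_scale_leq.
under eq_bigr => k _ do rewrite coefZ -scalerA.
by rewrite -scaler_sumr fQ // scaler0.
Qed.

Lemma annihilates_tailM P Q : annihilates_tail Q f -> annihilates_tail (P * Q) f.
Proof.
elim/poly_ind: P Q => [|P c IHP] Q fQ.
  by rewrite mul0r => t _; rewrite size_poly0 big_ord0.
rewrite mulrDl -mulrA mul_polyC; apply: annihilates_tailD.
  exact/IHP/annihilates_tailXM.
exact: annihilates_tailZ.
Qed.

End AnnihilatesTail.

Lemma is_denominatorM p p' P Q (f : nat -> 'M[C]_(p, p')) :
  P != 0 -> is_denominator Q f -> is_denominator (P * Q) f.
Proof. by move=> P_neq0 [Q_neq0 fQ]; split; [rewrite mulf_neq0 | apply: annihilates_tailM]. Qed.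

Lemma eq_is_denominator p p' Q (e f : nat -> 'M[C]_(p, p')) :
  (forall r, (0 < r)%N -> e r = f r) -> is_denominator Q f -> is_denominator Q e.
Proof.
move=> ef [Q_neq0 fQ]; split=> // t t_gt0; rewrite -[RHS](fQ t t_gt0).
by apply: eq_bigr => k _; rewrite ef // addn_gt0 t_gt0 orbT.
Qed.

Lemma is_denominator_mulmxr p p' p'' Q (f : nat -> 'M[C]_(p, p')) (B : 'M_(p', p'')) :
  is_denominator Q f -> is_denominator Q (fun r => f r *m B).
Proof.
move=> [Q_neq0 fQ]; split=> // t t_gt0.
rewrite -[RHS](mul0mx _ B) -(fQ t t_gt0) mulmx_suml.
by apply: eq_bigr => k _; rewrite scalemxAl.
Qed.

Lemma is_denominator_mulmxl p p' p'' Q (f : nat -> 'M[C]_(p', p'')) (B : 'M_(p, p')) :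
  is_denominator Q f -> is_denominator Q (fun r => B *m f r).
Proof.
move=> [Q_neq0 fQ]; split=> // t t_gt0.
rewrite -[RHS](mulmx0 _ B) -(fQ t t_gt0) mulmx_sumr.
by apply: eq_bigr => k _; rewrite scalemxAr.
Qed.

Lemma is_denominatorD p p' Q (f g : nat -> 'M[C]_(p, p')) :
  is_denominator Q f -> is_denominator Q g -> is_denominator Q (fun r => f r + g r).
Proof.
move=> [Q_neq0 fQ] [_ gQ]; split=> // t t_gt0.
under eq_bigr => k _ do rewrite scalerDr.
by rewrite big_split /= fQ // gQ // addr0.
Qed.

Lemma is_pole_of_denominatorM p p' p1 p1' p2 p2' (e : nat -> 'M[C]_(p, p'))
    (f : nat -> 'M[C]_(p1, p1')) (g : nat -> 'M[C]_(p2, p2')) z :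
  (forall Q1 Q2, is_denominator Q1 f -> is_denominator Q2 g ->
     is_denominator (Q1 * Q2) e) ->
  is_pole e z -> is_pole f z \/ is_pole g z.
Proof.
move=> efg e_z; have [f_z|/existsNP[Q1 /not_implyP[fQ1 /negP Q1z]]] := pselect (is_pole f z).
  by left.
have [g_z|/existsNP[Q2 /not_implyP[gQ2 /negP Q2z]]] := pselect (is_pole g z).
  by right.
by have := e_z _ (efg _ _ fQ1 gQ2); rewrite rootM (negbTE Q1z) (negbTE Q2z).
Qed.

End Denominators.

Section WeightBlocks.
Variables (C : fieldType) (m : nat) (dm : 'rV[C]_m -> nat).

Lemma id_op_diag mu : id_op dm mu mu = 1%:M.
Proof. by apply/matrixP => a c; rewrite !mxE eqxx. Qed.

Lemma mul2E (f g : gop dm) a b mu nu :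
  mul2 f a g b mu nu = f (mu + b) nu *m g mu (mu + b).
Proof. by rewrite /mul2 /= big_seq1 big_nil !addr0 id_op_diag mulmx1. Qed.

Lemma comm_opE (f g : gop dm) a b mu nu :
  comm_op f a g b mu nu = f (mu + b) nu *m g mu (mu + b) - g (mu + a) nu *m f mu (mu + a).
Proof. by rewrite /comm_op !mul2E. Qed.

Lemma is_denominator_commutator (F : nat -> gop dm) mu beta
    (E : nat -> 'M[C]_(dm mu)) Q1 Q2 :
  is_denominator Q1 (fun r => F r mu (mu + beta)) ->
  is_denominator Q2 (fun r => F r (mu - beta) (mu - beta + beta)) ->
  (exists B B', forall r, (0 < r)%N ->
     E r = F r (mu - beta) mu *m B + B' *m F r mu (mu + beta)) ->
  is_denominator (Q1 * Q2) E.
Proof.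
move=> FQ1 FQ2 [B [B' EF]]; rewrite subrK in FQ2.
have [Q1_neq0 _] := FQ1; have [Q2_neq0 _] := FQ2.
apply: eq_is_denominator EF _; apply: is_denominatorD.
  exact/is_denominatorM/is_denominator_mulmxr.
by rewrite mulrC; apply/is_denominatorM/is_denominator_mulmxl.
Qed.

End WeightBlocks.

Lemma yangian_xi_commutator (C : fieldType) n (A : 'M[int]_n) d m
    (al alv : 'I_n -> 'rV[C]_m) hb (dm : 'rV[C]_m -> nat)
    (xi : 'I_n -> nat -> gop dm) (x : bool -> 'I_n -> nat -> gop dm) :
  yangian_rep A d al alv hb xi x -> forall b i mu, exists B B', forall r,
    xi i r mu mu = x b i r (mu - rdeg al b i) mu *m B
                   + B' *m x b i r mu (mu + rdeg al b i).
Proof.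
case=> _ [_ [_ [_ [_ [_ [_ [Y5 _]]]]]]] [] i mu /=.
  exists (x false i 0%N mu (mu - al i)), (- x false i 0%N (mu + al i) mu) => r.
  by have := Y5 i i r 0%N mu mu; rewrite eqxx comm_opE addn0 mulNmx => <-.
rewrite opprK; exists (- x true i 0%N mu (mu + al i)), (x true i 0%N (mu - al i) mu).
move=> r; have := Y5 i i 0%N r mu mu; rewrite eqxx comm_opE add0n mulmxN => <-.
by rewrite addrC.
Qed.

(* Only positive indices: (QL6) also involves Psi^-_{i,r}, which vanishes for r > 0. *)
Lemma qloop_Psi_commutator (R : realType) n (A : 'M[int]_n) d m
    (al alv : 'I_n -> 'rV[complex R]_m) q lq (dm : 'rV[complex R]_m -> nat)
    (psp psm : 'I_n -> nat -> gop dm) (X : bool -> 'I_n -> int -> gop dm) :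
  qloop_rep A d al alv q lq psp psm X -> forall b i mu,
  q ^+ d i - (q ^+ d i)^-1 != 0 -> exists B B', forall r,
    psp i r.+1 mu mu = X b i r.+1 (mu - rdeg al b i) mu *m B
                       + B' *m X b i r.+1 mu (mu + rdeg al b i).
Proof.
case=> _ [_ [_ [_ [_ [_ [_ [_ [QL6 _]]]]]]]] [] i mu /=; set c := _ - _ => c_neq0.
  exists (c *: X false i 0 mu (mu - al i)), (- (c *: X false i 0 (mu + al i) mu)).
  move=> r; have := QL6 i i r.+1 0 mu mu; rewrite eqxx comm_opE addr0 /Psi /= subr0.
  move=> QL6r; rewrite -[LHS]scale1r -(mulfV c_neq0) -scalerA -QL6r.
  by rewrite scalerBr scalemxAr scalemxAl mulNmx.
rewrite opprK; exists (- (c *: X true i 0 mu (mu + al i))), (c *: X true i 0 (mu - al i) mu).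
move=> r; have := QL6 i i 0 r.+1 mu mu; rewrite eqxx comm_opE add0r /Psi /= subr0.
move=> QL6r; rewrite -[LHS]scale1r -(mulfV c_neq0) -scalerA -QL6r.
by rewrite scalerBr scalemxAl scalemxAr mulmxN addrC.
Qed.

Lemma yangian_xi_poles (C : fieldType) n (A : 'M[int]_n) d m
    (al alv : 'I_n -> 'rV[C]_m) hb (dm : 'rV[C]_m -> nat)
    (xi : 'I_n -> nat -> gop dm) (x : bool -> 'I_n -> nat -> gop dm) b i mu z :
  yangian_rep A d al alv hb xi x ->
  is_pole (xi_series hb xi i mu) z ->
  is_pole (x_series al hb x b i mu) z \/
  is_pole (x_series al hb x b i (mu - rdeg al b i)) z.
Proof.
move=> rep; apply: is_pole_of_denominatorM => Q1 Q2 xQ1 xQ2.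
pose F : nat -> gop dm := fun r a c => if r is r'.+1 then hb *: x b i r' a c else 0.
apply: (is_denominator_commutator (F := F) xQ1 xQ2).
have [B [B' xiE]] := yangian_xi_commutator rep b i mu.
exists B, B' => -[|r] // _.
by rewrite /xi_series xiE scalerDr scalemxAl scalemxAr.
Qed.

Lemma qloop_Psi_poles (R : realType) n (A : 'M[int]_n) d m
    (al alv : 'I_n -> 'rV[complex R]_m) q lq (dm : 'rV[complex R]_m -> nat)
    (psp psm : 'I_n -> nat -> gop dm) (X : bool -> 'I_n -> int -> gop dm) b i mu z :
  qloop_rep A d al alv q lq psp psm X -> q ^+ d i - (q ^+ d i)^-1 != 0 ->
  is_pole (Psi_series psp i mu) z ->
  is_pole (X_series al X b i mu) z \/
  is_pole (X_series al X b i (mu - rdeg al b i)) z.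
Proof.
move=> rep qi_neq0; apply: is_pole_of_denominatorM => Q1 Q2 XQ1 XQ2.
apply: (is_denominator_commutator (F := fun r : nat => X b i r) XQ1 XQ2).
have [B [B' PsiE]] := qloop_Psi_commutator rep b mu qi_neq0.
by exists B, B' => -[|r] // _; apply: PsiE.
Qed.

Lemma cexp_neq0 (R : realType) (z : complex R) : cexp z != 0.
Proof.
case: z => a b; rewrite eq_complex /= !mulf_eq0 gt_eqF ?expR_gt0 //=.
apply/andP => -[/eqP cos_b /eqP sin_b].
by have /eqP := cos2Dsin2 b; rewrite cos_b sin_b expr0n addr0 eq_sym oner_eq0.
Qed.

Lemma expr_subV_neq0 (F : fieldType) (q : F) k :
  q != 0 -> q ^+ (k * 2) != 1 -> q ^+ k - (q ^+ k)^-1 != 0.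
Proof.
move=> q_neq0; apply: contra; rewrite subr_eq0 => /eqP qkV.
by rewrite exprM expr2 {1}qkV mulVf // expf_neq0.
Qed.

Theorem lemma3p7 (R : realType) (n : nat) (A : 'M[int]_n) (d : 'I_n -> nat)
    (m : nat) (al alv : 'I_n -> 'rV[complex R]_m)
    (hA : generalized_cartan A) (hd : symmetrisers A d)
    (hreal : realization A al alv) :
  (* (i) Yangian *)
  (forall (hb : complex R), hb != 0 ->
   forall (dm : 'rV[complex R]_m -> nat) (xi : 'I_n -> nat -> gop dm)
          (x : bool -> 'I_n -> nat -> gop dm),
   yangian_rep A d al alv hb xi x -> ffd dm al ->
   forall (mu : 'rV[complex R]_m) (i : 'I_n), (0 < dm mu)%N ->
   forall (b : bool) (z : complex R),
     is_pole (xi_series hb xi i mu) z ->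
     is_pole (x_series al hb x b i mu) z \/
     is_pole (x_series al hb x b i (mu - rdeg al b i)) z) /\
  (* (ii) quantum loop algebra *)
  (forall (q lq : complex R), q = cexp lq ->
   (forall k : nat, (0 < k)%N -> q ^+ k != 1) ->
   forall (dm : 'rV[complex R]_m -> nat) (psp psm : 'I_n -> nat -> gop dm)
          (X : bool -> 'I_n -> int -> gop dm),
   qloop_rep A d al alv q lq psp psm X -> ffd dm al ->
   forall (mu : 'rV[complex R]_m) (i : 'I_n), (0 < dm mu)%N ->
   forall (b : bool) (z : complex R),
     is_pole (Psi_series psp i mu) z ->
     is_pole (X_series al X b i mu) z \/
     is_pole (X_series al X b i (mu - rdeg al b i)) z).
Proof.
split=> [hb _ dm xi x rep _ mu i _ b z|q lq q_def q_not_unity dm psp psm X rep _ mu i _ b z].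
  exact: (yangian_xi_poles (i := i) (mu := mu) b rep).
have qi_neq0 : q ^+ d i - (q ^+ d i)^-1 != 0.
  have [d_gt0 _] := hd.
  apply: expr_subV_neq0; first by rewrite q_def cexp_neq0.
  by rewrite q_not_unity // muln_gt0 d_gt0.
exact: (qloop_Psi_poles (i := i) (mu := mu) b rep qi_neq0).
Qed.
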